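(* Let $\mathcal{X}$ and $\mathcal{Y}$ be triangle meshes with $n_{\mathcal{X}}$ and $n_{\mathcal{Y}}$ vertices and symmetric positive definite mass matrices $M_{\mathcal{X}}\in\mathbb{R}^{n_{\mathcal{X}}\times n_{\mathcal{X}}}$, $M_{\mathcal{Y}}\in\mathbb{R}^{n_{\mathcal{Y}}\times n_{\mathcal{Y}}}$. Let $\Phi_{\mathcal{X},k}\in\mathbb{R}^{n_{\mathcal{X}}\times k}$ and $\Phi_{\mathcal{Y},k}\in\mathbb{R}^{n_{\mathcal{Y}}\times k}$ be the matrices of the first $k$ Laplacian eigenfunctions, normalized so that $\Phi_{\mathcal{X},k}^{\top}M_{\mathcal{X}}\Phi_{\mathcal{X},k}=I$ and $\Phi_{\mathcal{Y},k}^{\top}M_{\mathcal{Y}}\Phi_{\mathcal{Y},k}=I$, and set $\Phi_{\mathcal{X},k}^{\dagger}=\Phi_{\mathcal{X},k}^{\top}M_{\mathcal{X}}$, $\Phi_{\mathcal{Y},k}^{\dagger}=\Phi_{\mathcal{Y},k}^{\top}M_{\mathcal{Y}}$. Let $G_{\mathcal{X}},G_{\mathcal{Y}}\in\mathbb{R}^{k\times k}$ be diagonal matrices with diagonal entries in $(0,1]$, and define the learnable bases $\Psi_{\mathcal{X},k}=\Phi_{\mathcal{X},k}G_{\mathcal{X}}$, $\Psi_{\mathcal{Y},k}=\Phi_{\mathcal{Y},k}G_{\mathcal{Y}}$ with $\Psi_{\mathcal{X},k}^{\dagger}=G_{\mathcal{X}}^{-1}\Phi_{\mathcal{X},k}^{\top}M_{\mathcal{X}}$,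 $\Psi_{\mathcal{Y},k}^{\dagger}=G_{\mathcal{Y}}^{-1}\Phi_{\mathcal{Y},k}^{\top}M_{\mathcal{Y}}$. Let $F_{\mathcal{X}}\in\mathbb{R}^{n_{\mathcal{X}}\times d}$, $F_{\mathcal{Y}}\in\mathbb{R}^{n_{\mathcal{Y}}\times d}$ be feature matrices and $\Pi_{\mathcal{YX}}\in\mathbb{R}^{n_{\mathcal{Y}}\times n_{\mathcal{X}}}$ a matrix representing a pointwise map from $\mathcal{Y}$ to $\mathcal{X}$. Consider the problem $$C^{\mathrm{A}}_{\mathcal{XY}}=\arg\min_{C\in\mathbb{R}^{k\times k}}\left\|C\,\Psi_{\mathcal{X},k}^{\dagger}F_{\mathcal{X}}-\Psi_{\mathcal{Y},k}^{\dagger}F_{\mathcal{Y}}\right\|_{\mathrm{F}}^2+\lambda\left\|C\Lambda_{\mathcal{X}}-\Lambda_{\mathcal{Y}}C\right\|_{\mathrm{F}}^2,$$ where $\Lambda_{\mathcal{X}},\Lambda_{\mathcal{Y}}$ are the diagonal matrices of the first $k$ eigenvalues. Suppose (a) $\Pi_{\mathcal{YX}}F_{\mathcal{X}}=F_{\mathcal{Y}}$; (b) the columns of $F_{\mathcal{X}}$ lie in the span of the columns of $\Phi_{\mathcal{X},k}$ and the columns of $F_{\mathcal{Y}}$ lie in the span of the columns of $\Phi_{\mathcal{Y},k}$; (c) $\Phi_{\mathcal{X},k}^{\dagger}F_{\mathcal{X}}\in\mathbb{R}^{k\times d}$ and $\Phi_{\mathcal{Y},k}^{\dagger}F_{\mathcal{Y}}\in\mathbb{R}^{k\times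 d}$ are full rank, and $\lambda=0$. Then the minimizer $C^{\mathrm{A}}_{\mathcal{XY}}$ is unique and equals $\Psi_{\mathcal{Y},k}^{\dagger}\Pi_{\mathcal{YX}}\Psi_{\mathcal{X},k}$.
   Context: The matrices $\Psi_{\cdot,k}=\Phi_{\cdot,k}G_{\cdot}$ are called learnable spectral bases; the diagonal matrices $G$ (with entries in $(0,1]$) are called inhibition functions. $\|\cdot\|_{\mathrm{F}}$ is the Frobenius norm. ''Full rank'' for a $k\times d$ matrix means rank $k$ (requiring $d\ge k$). *)

From HB Require Import structures.
From mathcomp Require Import all_boot all_order all_algebra.
Set Implicit Arguments. Unset Strict Implicit. Unset Printing Implicit Defensive.
Import Order.TTheory GRing.Theory Num.Theory.
Local Open Scope ring_scope.

Definition spd (R : realFieldType) (n : nat) (M : 'M[R]_n) : Prop :=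
  M^T = M /\ forall v : 'cV[R]_n, v != 0 -> 0 < (v^T *m M *m v) 0 0.

Definition frob2 (R : realFieldType) (m n : nat) (A : 'M[R]_(m, n)) : R :=
  \sum_(i < m) \sum_(j < n) (A i j) ^+ 2.

Definition frob (R : rcfType) (m n : nat) (A : 'M[R]_(m, n)) : R :=
  Num.sqrt (frob2 A).

Definition pointwise_map_mx (R : realFieldType) (nY nX : nat) (Pi : 'M[R]_(nY, nX)) : Prop :=
  exists f : 'I_nY -> 'I_nX, Pi = \matrix_(i, j) ((f i == j)%:R).

Definition inhibition_mx (R : realFieldType) (k : nat) (G : 'M[R]_k) : Prop :=
  exists g : 'rV[R]_k, G = diag_mx g /\ forall i, 0 < g 0 i <= 1.

Definition objA (R : rcfType) (k d : nat)
  (PsiXdFX PsiYdFY : 'M[R]_(k, d)) (lam : R) (LamX LamY : 'M[R]_k) (C : 'M[R]_k) : R :=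
  frob (C *m PsiXdFX - PsiYdFY) ^+ 2 + lam * frob (C *m LamX - LamY *m C) ^+ 2.

From HB Require Import structures.
From mathcomp Require Import all_boot all_order all_algebra.
Set Implicit Arguments. Unset Strict Implicit. Unset Printing Implicit Defensive.
Import Order.TTheory GRing.Theory Num.Theory.
Local Open Scope ring_scope.

(* With [lam = 0] the objective is the squared residual [||C A - B||^2] with
   [A = Psi_X^+ F_X] and [B = Psi_Y^+ F_Y].  Since [F_X] lies in the span of the
   M-orthonormal basis [Phi_X], the learned basis reproduces it:
   [Psi_X Psi_X^+ F_X = F_X], so [C0 A = Psi_Y^+ Pi F_X = B] and [C0] attains the
   value 0.  As [A] has full row rank, [C A = B] forces [C = C0]. *)

Lemma frob2_ge0 (R : realFieldType) m n (A : 'M[R]_(m, n)) : 0 <= frob2 A.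
Proof. by apply: sumr_ge0 => i _; apply: sumr_ge0 => j _; apply: sqr_ge0. Qed.

Lemma frob2_eq0 (R : realFieldType) m n (A : 'M[R]_(m, n)) :
  (frob2 A == 0) = (A == 0).
Proof.
apply/eqP/eqP => [A0 | ->]; last first.
  by apply: big1 => i _; apply: big1 => j _; rewrite mxE expr0n.
have row0 := psumr_eq0P (fun i _ => sumr_ge0 _ (fun j _ => sqr_ge0 (A i j))) A0.
apply/matrixP => i j; rewrite mxE; apply/eqP; rewrite -sqrf_eq0; apply/eqP.
exact: (psumr_eq0P (fun j _ => sqr_ge0 (A i j)) (row0 i isT)).
Qed.

Lemma frob_sqr (R : rcfType) m n (A : 'M[R]_(m, n)) : frob A ^+ 2 = frob2 A.
Proof. by rewrite sqr_sqrtr // frob2_ge0. Qed.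

Lemma objA_lam0 (R : rcfType) k d (A B : 'M[R]_(k, d)) (LX LY C : 'M[R]_k) :
  objA A B 0 LX LY C = frob2 (C *m A - B).
Proof. by rewrite /objA mul0r addr0 frob_sqr. Qed.

Lemma inhibition_mx_unit (R : realFieldType) k (G : 'M[R]_k) :
  inhibition_mx G -> G \in unitmx.
Proof.
case=> g [-> g_range]; rewrite unitmxE det_diag unitfE prodf_seq_neq0.
by apply/allP => i _; case/andP: (g_range i) => /gt_eqF ->.
Qed.

Lemma row_free_unit_mull (F : fieldType) k d (U : 'M[F]_k) (A : 'M[F]_(k, d)) :
  U \in unitmx -> row_free (U *m A) = row_free A.
Proof. by move=> Uu; rewrite /row_free eqmxMfull // row_full_unit. Qed.

Lemma orthonormal_span_reconstruct (F : fieldType) n k d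
    (M : 'M[F]_n) (Phi : 'M[F]_(n, k)) (X : 'M[F]_(n, d)) :
  Phi^T *m M *m Phi = 1%:M -> (X^T <= Phi^T)%MS ->
  Phi *m (Phi^T *m M *m X) = X.
Proof.
move=> orthoPhi /submxP[D XT]; have -> : X = Phi *m D^T.
  by rewrite -[X]trmxK XT trmx_mul trmxK.
by rewrite [X in Phi *m X]mulmxA orthoPhi mul1mx.
Qed.

Lemma scaled_basis_reconstruct (F : fieldType) n k d
    (M : 'M[F]_n) (Phi : 'M[F]_(n, k)) (G : 'M[F]_k) (X : 'M[F]_(n, d)) :
  G \in unitmx -> Phi^T *m M *m Phi = 1%:M -> (X^T <= Phi^T)%MS ->
  Phi *m G *m (invmx G *m Phi^T *m M *m X) = X.
Proof.
move=> Gu orthoPhi XinPhi.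
rewrite -!mulmxA (mulmxA G) (mulmxV Gu) mul1mx.
by rewrite -[RHS](orthonormal_span_reconstruct orthoPhi XinPhi) !mulmxA.
Qed.

Lemma exact_fit_unique_argmin (R : realFieldType) m k d
    (A : 'M[R]_(k, d)) (B : 'M[R]_(m, d)) (C0 : 'M[R]_(m, k)) :
  row_free A -> C0 *m A = B ->
  (forall C, frob2 (C0 *m A - B) <= frob2 (C *m A - B)) /\
  (forall C, (forall C', frob2 (C *m A - B) <= frob2 (C' *m A - B)) -> C = C0).
Proof.
move=> freeA fitC0; have fit0 : frob2 (C0 *m A - B) = 0.
  by apply/eqP; rewrite frob2_eq0 fitC0 subrr.
split=> [C | C minC]; first by rewrite fit0 frob2_ge0.
apply: (row_free_inj freeA); apply/eqP; rewrite fitC0 -subr_eq0 -frob2_eq0.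
by rewrite eq_le frob2_ge0 andbT -fit0 minC.
Qed.

Theorem mainTheorem1 (R : rcfType) (nX nY k d : nat)
  (MX : 'M[R]_nX) (MY : 'M[R]_nY)
  (LX : 'M[R]_nX) (LY : 'M[R]_nY)
  (PhiX : 'M[R]_(nX, k)) (PhiY : 'M[R]_(nY, k))
  (lamX lamY : 'rV[R]_k)
  (GX GY : 'M[R]_k)
  (FX : 'M[R]_(nX, d)) (FY : 'M[R]_(nY, d))
  (Pi : 'M[R]_(nY, nX)) (lam : R) :
  spd MX -> spd MY ->
  (* Phi are eigenfunctions of the (generalized) Laplacian eigenproblem L phi = lambda M phi *)
  LX *m PhiX = MX *m PhiX *m diag_mx lamX ->
  LY *m PhiY = MY *m PhiY *m diag_mx lamY ->
  (* M-orthonormalization *)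
  PhiX^T *m MX *m PhiX = 1%:M ->
  PhiY^T *m MY *m PhiY = 1%:M ->
  inhibition_mx GX -> inhibition_mx GY ->
  pointwise_map_mx Pi ->
  (* (a) *) Pi *m FX = FY ->
  (* (b) column spans *)
  (FX^T <= PhiX^T)%MS -> (FY^T <= PhiY^T)%MS ->
  (* (c) full rank and lambda = 0 *)
  \rank (PhiX^T *m MX *m FX) = k -> \rank (PhiY^T *m MY *m FY) = k ->
  lam = 0 ->
  let PsiX := PhiX *m GX in
  let PsiY := PhiY *m GY in
  let PsiXd := invmx GX *m PhiX^T *m MX in
  let PsiYd := invmx GY *m PhiY^T *m MY in
  let obj := objA (PsiXd *m FX) (PsiYd *m FY) lam (diag_mx lamX) (diag_mx lamY) in
  let C0 := PsiYd *m Pi *m PsiX in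
  (forall C : 'M[R]_k, obj C0 <= obj C) /\
  (forall C : 'M[R]_k, (forall C' : 'M[R]_k, obj C <= obj C') -> C = C0).
Proof.
move=> _ _ _ _ orthoX _ inhibX _ _ PiFX FXinPhiX _ rankX _ ->.
move=> PsiX PsiY PsiXd PsiYd obj C0.
have GXu := inhibition_mx_unit inhibX.
have freeA : row_free (PsiXd *m FX).
  by rewrite /PsiXd -!mulmxA row_free_unit_mull ?unitmx_inv // /row_free !mulmxA rankX.
have reconstructX : PsiX *m (PsiXd *m FX) = FX.
  exact: scaled_basis_reconstruct.
have fitC0 : C0 *m (PsiXd *m FX) = PsiYd *m FY.
  by rewrite -(mulmxA _ PsiX) reconstructX -PiFX mulmxA.
have objE C : obj C = frob2 (C *m (PsiXd *m FX) - PsiYd *m FY).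
  exact: objA_lam0.
have [C0_min C0_unique] := exact_fit_unique_argmin freeA fitC0.
split=> [C | C C_min]; first by rewrite !objE.
by apply: C0_unique => C'; rewrite -!objE.
Qed.
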